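(* In the setting described in the context, for any $n\ge1$, any $1\le k\le n$ and any $\tau\in\mathcal{S}_{n-k}$, the map $P\mapsto L_P$ is constant on $$\mathcal{C}_{n,k}(\tau)=\{P\in\mathcal{C}_{n,k}:\mathcal{I}(\tau)\cap\Delta(P)\neq\emptyset\}.$$
   Context: Standing setup. Let $s,t>0$ with $s+t=1$, and let $\theta\in\mathbb{R}$ with $\inf_{q\in\mathbb{N}}q^{1/s}\|q\theta\|>0$, where $\|x\|$ is the distance from $x$ to the nearest integer. Let $\beta\in(0,1)$, let $A_0$ be a compact interval of length $l>0$, let $R=16\beta^{-4}$, and let $c=\min\{\inf_{q\in\mathbb{N}}q^{1/s}\|q\theta\|,\ \tfrac14 lR^{-1},\ \tfrac18R^{-2-3/t^2}\}$. Rational points are written $P=(p/q,r/q)$ with $q>0$ and $p,q,r$ coprime integers. Let $\mathcal{C}=\{(p/q,r/q)\in\mathbb{Q}^2:|\theta-p/q|<c/q^{1+s}\}$ and $\Delta(P)=\{y\in\mathbb{R}:|y-r/q|<c/q^{1+t}\}$. Non-vertical rational lines are written $L(A,B,C)=\{(x,y):y=(Ax+C)/B\}$ with $A,B,C$ coprime integers, $B>0$. For each $P=(p/q,r/q)\in\mathcal{C}$ fix a line $L_P=L(A_P,B_P,C_P)$ passing through $P$ with $|A_P|\le q^s$ and $B_P\le q^t$ (such a line exists). Let $H_n=4cl^{-1}R^n$ and $\mathcal{C}_n=\{P=(p/q,r/q)\in\mathcal{C}:H_n\le qB_P<H_{n+1}\}$ for $n\ge1$ (these partition $\mathcal{C}$).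 Let $\lambda=3/t^2$, $\mu=1/(t(1+t))$, $\mathcal{C}_{n,1}=\{P\in\mathcal{C}_n:H_{n+1}^{t/(1+t)}R^{-\lambda}\le B_P<H_{n+1}^{t/(1+t)}\}$ and, for $2\le k\le n$, $\mathcal{C}_{n,k}=\{P\in\mathcal{C}_n:H_{n+1}^{t/(1+t)}R^{-\lambda-(k-1)\mu}\le B_P<H_{n+1}^{t/(1+t)}R^{-\lambda-(k-2)\mu}\}$. Let $\mathcal{T}$ be an $[R]$-regular rooted tree with root $\tau_0$ ($[\cdot]$ = integer part), $\mathcal{T}_n$ its vertices of height $n$, and $\tau\prec\tau'$ meaning $\tau'$ is an ancestor of $\tau$ (possibly equal). Fix an injective map $\mathcal{I}$ from $\mathcal{T}$ to closed subintervals of $A_0$ with $|\mathcal{I}(\tau)|=lR^{-n}$ for $\tau\in\mathcal{T}_n$, $\mathcal{I}(\tau)\subset\mathcal{I}(\tau')$ whenever $\tau\prec\tau'$, and such that for each $\tau'$ the intervals $\mathcal{I}(\tau)$ over successors $\tau$ of $\tau'$ have pairwise disjoint interiors and connected union. Define $\mathcal{S}_0=\{\tau_0\}$ and for $n\ge1$, $\mathcal{S}_n=\{\tau:\tau$ is a successor of some vertex in $\mathcal{S}_{n-1}$ and $\mathcal{I}(\tau)\cap\bigcup_{P\in\mathcal{C}_n}\Delta(P)=\emptyset\}$. *)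

From Stdlib Require Import Reals ZArith List.
Open Scope R_scope.

Definition dist_nearest_int (x : R) : R :=
  Rmin (x - IZR (Int_part x)) (IZR (Int_part x) + 1 - x).

Definition is_inf (E : R -> Prop) (m : R) : Prop :=
  (forall x, E x -> m <= x) /\ (forall b, (forall x, E x -> b <= x) -> b <= m).

Definition dioph_set (s theta : R) (x : R) : Prop :=
  exists q : nat, (1 <= q)%nat /\
    x = Rpower (INR q) (1 / s) * dist_nearest_int (INR q * theta).

Definition Rbig (beta : R) : R := 16 * / beta ^ 4.

Definition cconst (kappa l beta t : R) : R :=
  Rmin kappa (Rmin (/ 4 * l * / Rbig beta)
                   (/ 8 * Rpower (Rbig beta) (-2 - 3 / t ^ 2))).

Definition tree_arity (beta : R) : nat := Z.to_nat (Int_part (Rbig beta)).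

(* Rational point P = (p/q, r/q) represented by the triple (p,q,r). *)
Definition ratpt := (Z * Z * Z)%type.
Definition pt_p (P : ratpt) : Z := fst (fst P).
Definition pt_q (P : ratpt) : Z := snd (fst P).
Definition pt_r (P : ratpt) : Z := snd P.
Definition is_ratpt (P : ratpt) : Prop :=
  (0 < pt_q P)%Z /\ Z.gcd (Z.gcd (pt_p P) (pt_q P)) (pt_r P) = 1%Z.

(* Line L(A,B,C) = {y = (Ax+C)/B} represented by the triple (A,B,C). *)
Definition line := (Z * Z * Z)%type.
Definition ln_A (L : line) : Z := fst (fst L).
Definition ln_B (L : line) : Z := snd (fst L).
Definition ln_C (L : line) : Z := snd L.
Definition is_line (L : line) : Prop :=
  (0 < ln_B L)%Z /\ Z.gcd (Z.gcd (ln_A L) (ln_B L)) (ln_C L) = 1%Z.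
Definition on_line (L : line) (P : ratpt) : Prop :=
  IZR (pt_r P) / IZR (pt_q P) =
  (IZR (ln_A L) * (IZR (pt_p P) / IZR (pt_q P)) + IZR (ln_C L)) / IZR (ln_B L).

Definition inC (s theta c : R) (P : ratpt) : Prop :=
  is_ratpt P /\
  Rabs (theta - IZR (pt_p P) / IZR (pt_q P)) < c / Rpower (IZR (pt_q P)) (1 + s).

Definition inDelta (t c : R) (P : ratpt) (y : R) : Prop :=
  Rabs (y - IZR (pt_r P) / IZR (pt_q P)) < c / Rpower (IZR (pt_q P)) (1 + t).

Definition Hn (c l beta : R) (n : nat) : R := 4 * c * / l * Rbig beta ^ n.

Definition inCn (s theta c l beta : R) (LP : ratpt -> line) (n : nat)
    (P : ratpt) : Prop :=
  inC s theta c P /\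
  Hn c l beta n <= IZR (pt_q P * ln_B (LP P)) < Hn c l beta (S n).

Definition inCnk (s t theta c l beta : R) (LP : ratpt -> line) (n k : nat)
    (P : ratpt) : Prop :=
  let X := Rpower (Hn c l beta (S n)) (t / (1 + t)) in
  let lam := 3 / t ^ 2 in
  let mu := 1 / (t * (1 + t)) in
  let B := IZR (ln_B (LP P)) in
  inCn s theta c l beta LP n P /\
  (if Nat.eqb k 1
   then X * Rpower (Rbig beta) (- lam) <= B < X
   else X * Rpower (Rbig beta) (- lam - INR (k - 1) * mu) <= B
        < X * Rpower (Rbig beta) (- lam - INR (k - 2) * mu)).

(* The [R]-regular rooted tree: vertices are lists of child indices (< m);
   the root is nil, the children of tau are i :: tau (i < m), the height of
   tau is its length, and tau' is an ancestor of tau iff tau = u ++ tau'. *)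
Definition vertex (m : nat) (tau : list nat) : Prop :=
  Forall (fun i => (i < m)%nat) tau.

Definition in_cl (J : R * R) (x : R) : Prop := fst J <= x <= snd J.
Definition in_open (J : R * R) (x : R) : Prop := fst J < x < snd J.

Definition good_tree_map (m : nat) (a0 l Rb : R) (I : list nat -> R * R) : Prop :=
  (forall tau, vertex m tau ->
     a0 <= fst (I tau) /\ snd (I tau) <= a0 + l /\
     snd (I tau) - fst (I tau) = l * / Rb ^ length tau) /\
  (forall tau tau', vertex m tau -> vertex m tau' -> I tau = I tau' -> tau = tau') /\
  (forall tau u, vertex m (u ++ tau) ->
     fst (I tau) <= fst (I (u ++ tau)) /\ snd (I (u ++ tau)) <= snd (I tau)) /\
  (forall tau i j, vertex m tau -> (i < m)%nat -> (j < m)%nat -> i <> j ->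
     forall x, ~ (in_open (I (i :: tau)) x /\ in_open (I (j :: tau)) x)) /\
  (forall tau, vertex m tau ->
     let U := fun x => exists i, (i < m)%nat /\ in_cl (I (i :: tau)) x in
     forall x y z, x <= y <= z -> U x -> U z -> U y).

Fixpoint inS (s t theta c l beta : R) (LP : ratpt -> line)
    (I : list nat -> R * R) (n : nat) (tau : list nat) : Prop :=
  match n with
  | O => tau = nil
  | S n' => exists i tau', tau = i :: tau' /\ (i < tree_arity beta)%nat /\
      inS s t theta c l beta LP I n' tau' /\
      (forall P, inCn s theta c l beta LP (S n') P ->
         forall y, in_cl (I tau) y -> ~ inDelta t c P y)
  end.

(* Take two such points P1, P2, with w_i in I(tau) /\ Delta(P_i); since
   tau has height n-k, |w1 - w2| <= l R^(k-n).
   - k = 1: the integer q2 (A1 p2/q2 - B1 r2/q2 + C1) measuring how far P2 is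
     from L_(P1) has absolute value < 1 ([level1_on_line]); so each point lies
     on the other's line, and two distinct points determine a line.
   - k >= 2: both lines have residual A theta - B w1 + C of size at most
     K B_i at (theta, w1).  Parallel lines then coincide
     ([parallel_lines_coincide]); secant lines meet at a rational point Q
     which belongs to C, has height q_Q B_Q < H_(n-k+1) and satisfies
     w1 in Delta(Q) ([intersection_approximation]) -- impossible, since the
     vertices of S_(n-k) were chosen to avoid such points
     ([inS_avoid_small_denominator]). *)

From Stdlib Require Import Reals ZArith List Lra Lia Psatz.
Open Scope R_scope.

(* Lines L(A,B,C) and rational points (p/q,r/q) are
   both encoded by such triples, so this is uniqueness of the encodings. *)
Lemma primitive_triple_eq (a1 b1 c1 a2 b2 c2 : Z) :
  (0 < b1)%Z -> (0 < b2)%Z ->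
  Z.gcd (Z.gcd a1 b1) c1 = 1%Z -> Z.gcd (Z.gcd a2 b2) c2 = 1%Z ->
  (a1 * b2 = a2 * b1)%Z -> (c1 * b2 = c2 * b1)%Z ->
  a1 = a2 /\ b1 = b2 /\ c1 = c2.
Proof.
  intros hb1 hb2 g1 g2 ea ec.
  (* the gcd of the triple (a1,b1,c1) scaled by b2 is b2, and symmetrically *)
  assert (E1 : Z.gcd (Z.gcd (a1 * b2) (b1 * b2)) (c1 * b2) = b2).
  { rewrite Z.gcd_mul_mono_r, (Z.abs_eq b2) by lia.
    rewrite Z.gcd_mul_mono_r, g1. lia. }
  assert (E2 : Z.gcd (Z.gcd (a2 * b1) (b2 * b1)) (c2 * b1) = b1).
  { rewrite Z.gcd_mul_mono_r, (Z.abs_eq b1) by lia.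
    rewrite Z.gcd_mul_mono_r, g2. lia. }
  rewrite ea, ec, (Z.mul_comm b1 b2) in E1. rewrite E1 in E2. subst b2.
  split; [|split]; auto; eapply Z.mul_reg_r; try eassumption; lia.
Qed.

Lemma primitive_reduction (a d b : Z) : (0 < d)%Z ->
  exists ka kd kb g, (0 < g)%Z /\ a = (ka * g)%Z /\ d = (kd * g)%Z /\
    b = (kb * g)%Z /\ (0 < kd)%Z /\ Z.gcd (Z.gcd ka kd) kb = 1%Z.
Proof.
  intros hd. set (g := Z.gcd (Z.gcd a d) b).
  assert (hg : (0 < g)%Z).
  { pose proof (Z.gcd_nonneg (Z.gcd a d) b).
    destruct (Z.eq_dec g 0) as [e|e]; [|lia].
    apply Z.gcd_eq_0 in e as [e _]. apply Z.gcd_eq_0 in e. lia. }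
  assert (da : (g | a)%Z)
    by (apply (Z.divide_trans _ (Z.gcd a d)); apply Z.gcd_divide_l).
  assert (dd : (g | d)%Z)
    by (apply (Z.divide_trans _ (Z.gcd a d));
        [apply Z.gcd_divide_l | apply Z.gcd_divide_r]).
  assert (db : (g | b)%Z) by apply Z.gcd_divide_r.
  destruct da as [ka ea], dd as [kd ed], db as [kb eb].
  exists ka, kd, kb, g. repeat split; auto; [nia|].
  assert (E : g = (Z.gcd (Z.gcd ka kd) kb * g)%Z).
  { unfold g at 1. rewrite ea, ed, eb at 1.
    rewrite Z.gcd_mul_mono_r, (Z.abs_eq g) by lia.
    rewrite Z.gcd_mul_mono_r, (Z.abs_eq g) by lia. reflexivity. }
  nia.
Qed.

Lemma IZR_pos_ge_1 (z : Z) : (0 < z)%Z -> 1 <= IZR z.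
Proof. intros. apply IZR_le. lia. Qed.

Lemma IZR_abs_ge_1 (z : Z) : z <> 0%Z -> 1 <= Rabs (IZR z).
Proof. intros. rewrite <- abs_IZR. apply IZR_le. lia. Qed.

Lemma IZR_abs_lt_1 (z : Z) : Rabs (IZR z) < 1 -> z = 0%Z.
Proof.
  intros h. destruct (Z.eq_dec z 0) as [|hz]; auto.
  apply IZR_abs_ge_1 in hz. lra.
Qed.

Lemma fraction_eq_cross (a b a' b' : Z) : (0 < b)%Z -> (0 < b')%Z ->
  IZR a / IZR b = IZR a' / IZR b' -> (a * b' = a' * b)%Z.
Proof.
  intros hb hb' e. apply IZR_lt in hb, hb'. apply eq_IZR. rewrite !mult_IZR.
  apply (Rmult_eq_reg_r (/ (IZR b * IZR b'))).
  - replace (IZR a * IZR b' * / (IZR b * IZR b')) with (IZR a / IZR b) by (field; lra).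
    replace (IZR a' * IZR b * / (IZR b * IZR b')) with (IZR a' / IZR b') by (field; lra).
    exact e.
  - apply Rinv_neq_0_compat. nra.
Qed.

Lemma ratpt_eq (P1 P2 : ratpt) : is_ratpt P1 -> is_ratpt P2 ->
  IZR (pt_p P1) / IZR (pt_q P1) = IZR (pt_p P2) / IZR (pt_q P2) ->
  IZR (pt_r P1) / IZR (pt_q P1) = IZR (pt_r P2) / IZR (pt_q P2) ->
  P1 = P2.
Proof.
  destruct P1 as [[p1 q1] r1], P2 as [[p2 q2] r2].
  unfold is_ratpt, pt_p, pt_q, pt_r; simpl. intros [hq1 g1] [hq2 g2] ex ey.
  apply fraction_eq_cross in ex, ey; auto.
  destruct (primitive_triple_eq p1 q1 r1 p2 q2 r2) as [-> [-> ->]]; auto.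
Qed.

Lemma line_eq (L1 L2 : line) : is_line L1 -> is_line L2 ->
  (ln_A L1 * ln_B L2 = ln_A L2 * ln_B L1)%Z ->
  (ln_C L1 * ln_B L2 = ln_C L2 * ln_B L1)%Z ->
  L1 = L2.
Proof.
  destruct L1 as [[A1 B1] C1], L2 as [[A2 B2] C2].
  unfold is_line, ln_A, ln_B, ln_C; simpl. intros [hB1 g1] [hB2 g2] eA eC.
  destruct (primitive_triple_eq A1 B1 C1 A2 B2 C2) as [-> [-> ->]]; auto.
Qed.

Lemma on_line_eq L P : is_line L -> is_ratpt P -> on_line L P ->
  IZR (ln_B L) * (IZR (pt_r P) / IZR (pt_q P)) =
  IZR (ln_A L) * (IZR (pt_p P) / IZR (pt_q P)) + IZR (ln_C L).
Proof.
  intros [hB _] [hq _] e. unfold on_line in e. rewrite e.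
  apply IZR_lt in hB. apply IZR_lt in hq. field. lra.
Qed.

(* A point whose cleared residual q (A x - B y + C) with respect to L is
   below 1 in absolute value lies on L: that residual is an integer. *)
Lemma on_line_of_small_residual L P : is_line L -> is_ratpt P ->
  Rabs (IZR (pt_q P) * (IZR (ln_A L) * (IZR (pt_p P) / IZR (pt_q P))
         - IZR (ln_B L) * (IZR (pt_r P) / IZR (pt_q P)) + IZR (ln_C L))) < 1 ->
  on_line L P.
Proof.
  intros [hB _] [hq _] h. apply IZR_lt in hB, hq.
  set (N := (ln_A L * pt_p P - ln_B L * pt_r P + ln_C L * pt_q P)%Z).
  assert (eN : IZR N = IZR (pt_q P) * (IZR (ln_A L) * (IZR (pt_p P) / IZR (pt_q P))
                 - IZR (ln_B L) * (IZR (pt_r P) / IZR (pt_q P)) + IZR (ln_C L)))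
    by (unfold N; rewrite plus_IZR, minus_IZR, !mult_IZR; field; lra).
  rewrite <- eN in h. apply IZR_abs_lt_1 in h.
  rewrite h in eN. unfold on_line.
  apply (Rmult_eq_reg_l (IZR (ln_B L) * IZR (pt_q P))); [|nra].
  replace (IZR (ln_B L) * IZR (pt_q P) *
           ((IZR (ln_A L) * (IZR (pt_p P) / IZR (pt_q P)) + IZR (ln_C L)) / IZR (ln_B L)))
    with (IZR (pt_q P) * (IZR (ln_A L) * (IZR (pt_p P) / IZR (pt_q P)) + IZR (ln_C L)))
    by (field; lra).
  assert (IZR (ln_B L) * IZR (pt_q P) * (IZR (pt_r P) / IZR (pt_q P))
          = IZR (pt_q P) * (IZR (ln_B L) * (IZR (pt_r P) / IZR (pt_q P)))) by ring.
  lra.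
Qed.

Lemma two_points_one_line L1 L2 P1 P2 :
  is_line L1 -> is_line L2 -> is_ratpt P1 -> is_ratpt P2 ->
  on_line L1 P1 -> on_line L1 P2 -> on_line L2 P1 -> on_line L2 P2 ->
  L1 = L2 \/ P1 = P2.
Proof.
  intros hL1 hL2 hP1 hP2 o11 o12 o21 o22.
  apply on_line_eq in o11, o12, o21, o22; auto.
  pose proof (IZR_lt _ _ (proj1 hL1)) as hB1.
  pose proof (IZR_lt _ _ (proj1 hL2)) as hB2.
  set (x1 := IZR (pt_p P1) / IZR (pt_q P1)) in *.
  set (x2 := IZR (pt_p P2) / IZR (pt_q P2)) in *.
  set (y1 := IZR (pt_r P1) / IZR (pt_q P1)) in *.
  set (y2 := IZR (pt_r P2) / IZR (pt_q P2)) in *.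
  destruct (Req_dec x1 x2) as [ex|ex].
  - (* same abscissa: L1 is not vertical, so the ordinates agree too *)
    right. apply ratpt_eq; auto. change (y1 = y2).
    apply (Rmult_eq_reg_l (IZR (ln_B L1))); [rewrite o11, o12, ex; reflexivity | lra].
  - (* distinct abscissae: slope and intercept are determined by P1, P2 *)
    left.
    set (A1 := IZR (ln_A L1)) in *. set (A2 := IZR (ln_A L2)) in *.
    set (B1 := IZR (ln_B L1)) in *. set (B2 := IZR (ln_B L2)) in *.
    set (C1 := IZR (ln_C L1)) in *. set (C2 := IZR (ln_C L2)) in *.
    assert (eA : A1 * B2 = A2 * B1).
    { apply (Rmult_eq_reg_r (x1 - x2)); [|lra].
      transitivity (B1 * B2 * (y1 - y2)); nra. }
    assert (eC : C1 * B2 = C2 * B1).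
    { replace C1 with (B1 * y1 - A1 * x1) by lra.
      replace C2 with (B2 * y1 - A2 * x1) by lra.
      transitivity (B1 * B2 * y1 - (A1 * B2) * x1); [ring|]. rewrite eA. ring. }
    unfold A1, A2, B1, B2, C1, C2 in eA, eC.
    rewrite <- !mult_IZR in eA, eC. apply eq_IZR in eA, eC.
    apply line_eq; auto.
Qed.

Lemma Rpower_pos x y : 0 < Rpower x y.
Proof. unfold Rpower; apply exp_pos. Qed.

Lemma Rpower_succ q e : 0 < q -> Rpower q (1 + e) = q * Rpower q e.
Proof. intros. rewrite Rpower_plus, Rpower_1; auto. Qed.

Lemma Rpower_ge_1 x e : 1 <= x -> 0 <= e -> 1 <= Rpower x e.
Proof. intros hx he. rewrite <- (Rpower_O x) by lra. apply Rle_Rpower; lra. Qed.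

Lemma ln_le x y : 0 < x -> x <= y -> ln x <= ln y.
Proof. intros hx [h|h]; [left; apply ln_increasing; lra | subst; lra]. Qed.

Lemma Rpower_le_1_plus x e : 0 < x -> 0 <= e <= 1 -> Rpower x e <= 1 + x.
Proof.
  intros hx he. destruct (Rle_or_lt x 1) as [h|h].
  - assert (hl : ln x <= 0) by (rewrite <- ln_1; apply ln_le; lra).
    assert (hel : e * ln x <= 0) by nra.
    enough (Rpower x e <= 1) by lra.
    unfold Rpower. rewrite <- exp_0.
    destruct hel as [hlt | ->]; [left; apply exp_increasing; exact hlt | lra].
  - enough (h1 : Rpower x e <= Rpower x 1) by (rewrite Rpower_1 in h1; lra).
    apply Rle_Rpower; lra.
Qed.

Lemma Rpower_ratio_le a b e : 0 < a -> 0 < b -> 0 <= e <= 1 ->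
  Rpower a e <= (1 + a / b) * Rpower b e.
Proof.
  intros ha hb he.
  replace a with ((a / b) * b) at 1 by (field; lra).
  rewrite <- Rpower_mult_distr; [|apply Rdiv_lt_0_compat; auto | auto].
  apply Rmult_le_compat_r; [left; apply Rpower_pos|].
  apply Rpower_le_1_plus; auto. apply Rdiv_lt_0_compat; auto.
Qed.

Lemma weighted_error_le q e a d c : 0 < q -> 0 <= a -> a <= Rpower q e ->
  Rabs d < c / Rpower q (1 + e) -> a * Rabs d <= c / q.
Proof.
  intros hq ha hae hd. rewrite Rpower_succ in hd; auto.
  pose proof (Rpower_pos q e) as hp. pose proof (Rabs_pos d).
  apply Rle_trans with (Rpower q e * Rabs d); [apply Rmult_le_compat_r; auto|].
  replace (c / q) with (Rpower q e * (c / (q * Rpower q e))) by (field; lra).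
  apply Rmult_le_compat_l; lra.
Qed.

Lemma weighted_error_cross q1 q2 e a d c :
  0 < q1 -> 0 < q2 -> 0 <= e <= 1 -> 0 <= c -> 0 <= a ->
  a <= Rpower q1 e -> Rabs d < c / Rpower q2 (1 + e) ->
  q2 * (a * Rabs d) <= c * (1 + q1 / q2).
Proof.
  intros h1 h2 he hc ha hae hd. rewrite Rpower_succ in hd; auto.
  pose proof (Rpower_pos q2 e) as hp. pose proof (Rabs_pos d).
  pose proof (Rpower_ratio_le q1 q2 e h1 h2 he) as hr.
  assert (h12 : 0 < 1 + q1 / q2)
    by (pose proof (Rdiv_lt_0_compat q1 q2 h1 h2); lra).
  apply Rle_trans with (q2 * ((1 + q1 / q2) * Rpower q2 e * Rabs d)).
  { apply Rmult_le_compat_l; [lra|]. apply Rmult_le_compat_r; lra. }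
  replace (c * (1 + q1 / q2))
    with (q2 * ((1 + q1 / q2) * Rpower q2 e * (c / (q2 * Rpower q2 e)))) by (field; lra).
  apply Rmult_le_compat_l; [lra|]. apply Rmult_le_compat_l; [nra|lra].
Qed.

Lemma Rbig_gt_16 beta : 0 < beta < 1 -> 16 < Rbig beta.
Proof.
  intros hb. unfold Rbig.
  assert (0 < beta ^ 4) by (apply pow_lt; lra).
  assert (beta ^ 4 < 1).
  { replace (beta ^ 4) with ((beta * beta) * (beta * beta)) by ring.
    assert (0 < beta * beta < 1) by nra. nra. }
  assert (1 < / beta ^ 4) by (rewrite <- Rinv_1; apply Rinv_lt_contravar; lra).
  lra.
Qed.

(* The three properties of c used in the proof (the Diophantine constant
   only serves to make c positive). *)
Lemma cconst_bounds kappa l beta t c : 0 < kappa -> 0 < l -> 0 < beta < 1 ->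
  c = cconst kappa l beta t ->
  0 < c /\ c <= / 4 * l * / Rbig beta /\
  c <= / 8 * Rpower (Rbig beta) (-2 - 3 / t ^ 2).
Proof.
  intros hk hl hb ->. pose proof (Rbig_gt_16 beta hb). unfold cconst.
  split; [|split].
  - apply Rmin_glb_lt; auto. apply Rmin_glb_lt.
    + apply Rmult_lt_0_compat; [lra|]. apply Rinv_0_lt_compat; lra.
    + apply Rmult_lt_0_compat; [lra|apply Rpower_pos].
  - eapply Rle_trans; [apply Rmin_r|apply Rmin_l].
  - eapply Rle_trans; [apply Rmin_r|apply Rmin_r].
Qed.

Lemma Hn_shift c l beta a b : Hn c l beta (a + b) = Hn c l beta a * Rbig beta ^ b.
Proof. unfold Hn. rewrite pow_add. ring. Qed.

Lemma Hn_S c l beta m : Hn c l beta (S m) = Hn c l beta m * Rbig beta.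
Proof. rewrite <- Nat.add_1_r, Hn_shift. ring. Qed.

Lemma Hn_pred c l beta n : 0 < beta < 1 ->
  Hn c l beta n = Hn c l beta (S n) / Rbig beta.
Proof.
  intros hb. pose proof (Rbig_gt_16 beta hb). rewrite Hn_S. field. lra.
Qed.

Lemma width_times_Hn c l beta n j : 0 < l -> 0 < beta < 1 -> (j <= n)%nat ->
  l * / Rbig beta ^ (n - j) * Hn c l beta (S n) = 4 * c * Rbig beta ^ (j + 1).
Proof.
  intros hl hb hj. pose proof (Rbig_gt_16 beta hb).
  unfold Hn. replace (S n) with ((n - j) + (j + 1))%nat by lia. rewrite pow_add.
  field. split; [lra | apply pow_nonzero; lra].
Qed.

Lemma c_R2_r_le c beta t : 0 < beta < 1 ->
  c <= / 8 * Rpower (Rbig beta) (-2 - 3 / t ^ 2) ->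
  c * (Rbig beta ^ 2 * Rpower (Rbig beta) (3 / t ^ 2)) <= / 8.
Proof.
  intros hb hc8. pose proof (Rbig_gt_16 beta hb) as hR.
  set (R := Rbig beta) in *. set (r := Rpower R (3 / t ^ 2)).
  assert (e : Rpower R (-2 - 3 / t ^ 2) * (R ^ 2 * r) = 1).
  { unfold r. rewrite <- (Rpower_pow 2 R), <- !Rpower_plus by lra.
    replace (-2 - 3 / t ^ 2 + (INR 2 + 3 / t ^ 2)) with 0 by (simpl; ring).
    apply Rpower_O; lra. }
  assert (0 < R ^ 2 * r)
    by (apply Rmult_lt_0_compat; [apply pow_lt; lra | apply Rpower_pos]).
  apply Rle_trans with (/ 8 * Rpower R (-2 - 3 / t ^ 2) * (R ^ 2 * r)).
  - apply Rmult_le_compat_r; lra.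
  - rewrite Rmult_assoc, e. lra.
Qed.

(* c <= l/(4R) means H_1 <= 1, so every point of C has height >= H_1. *)
Lemma Hn_1_le_1 c l beta : 0 < l -> 0 < beta < 1 ->
  c <= / 4 * l * / Rbig beta -> Hn c l beta 1 <= 1.
Proof.
  intros hl hb hc. pose proof (Rbig_gt_16 beta hb).
  unfold Hn. rewrite pow_1.
  apply Rle_trans with (4 * (/ 4 * l * / Rbig beta) * / l * Rbig beta).
  - apply Rmult_le_compat_r; [lra|].
    apply Rmult_le_compat_r; [left; apply Rinv_0_lt_compat; lra | lra].
  - right. field. lra.
Qed.

Lemma find_level (f : nat -> R) x N : f 1%nat <= x < f (S N) ->
  exists m, (1 <= m <= N)%nat /\ f m <= x < f (S m).
Proof.
  induction N; intros h; [lra|].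
  destruct (Rlt_or_le x (f (S N))) as [h'|h'].
  - destruct IHN as [m [hm hm']]; [lra|]. exists m; split; auto; lia.
  - exists (S N); split; [lia|lra].
Qed.

Lemma inS_vertex s t theta c l beta LP I N tau :
  inS s t theta c l beta LP I N tau ->
  length tau = N /\ vertex (tree_arity beta) tau.
Proof.
  revert tau; induction N; simpl; intros tau h.
  - subst; split; auto. constructor.
  - destruct h as [i [tau' [-> [hi [h' _]]]]].
    destruct (IHN _ h'). simpl; split; auto. constructor; auto.
Qed.

Lemma inS_interval_width s t theta c l beta LP I a0 N tau y y' :
  good_tree_map (tree_arity beta) a0 l (Rbig beta) I ->
  inS s t theta c l beta LP I N tau -> in_cl (I tau) y -> in_cl (I tau) y' ->
  Rabs (y - y') <= l * / Rbig beta ^ N.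
Proof.
  intros [HI1 _] hS hy hy'.
  destruct (inS_vertex _ _ _ _ _ _ _ _ _ _ hS) as [hlen hvert].
  destruct (HI1 tau hvert) as [_ [_ hw]]. rewrite hlen in hw.
  unfold in_cl in *. rewrite <- hw. apply Rabs_le. lra.
Qed.

(* The interval of a vertex of S_N avoids Delta(P) for every P in C_m,
   1 <= m <= N: each ancestor at height m was kept away from C_m. *)
Lemma inS_avoid s t theta c l beta LP I a0 N tau :
  good_tree_map (tree_arity beta) a0 l (Rbig beta) I ->
  inS s t theta c l beta LP I N tau ->
  forall m, (1 <= m <= N)%nat -> forall P, inCn s theta c l beta LP m P ->
  forall y, in_cl (I tau) y -> ~ inDelta t c P y.
Proof.
  intros [_ [_ [Hmon _]]].
  revert tau; induction N; simpl; intros tau h m hm; [lia|].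
  destruct h as [i [tau' [-> [hi [h' hav]]]]].
  destruct (Nat.eq_dec m (S N)) as [->|hne]; [exact hav|].
  intros P hP y hy. apply (IHN tau' h' m ltac:(lia) P hP y).
  destruct (inS_vertex _ _ _ _ _ _ _ _ _ _ h') as [_ hv].
  destruct (Hmon tau' (i :: nil)) as [m1 m2]; [simpl; constructor; auto|].
  simpl in m1, m2. unfold in_cl in *. lra.
Qed.

Lemma inS_avoid_low s t theta c l beta LP I a0 N tau Q y :
  good_tree_map (tree_arity beta) a0 l (Rbig beta) I ->
  inS s t theta c l beta LP I N tau ->
  Hn c l beta 1 <= 1 -> inC s theta c Q ->
  1 <= IZR (pt_q Q * ln_B (LP Q)) < Hn c l beta (S N) ->
  in_cl (I tau) y -> ~ inDelta t c Q y.
Proof.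
  intros HI hS hH1 hQ hh hy.
  destruct (find_level (Hn c l beta) (IZR (pt_q Q * ln_B (LP Q))) N)
    as [m [hm hlev]]; [lra|].
  exact (inS_avoid _ _ _ _ _ _ _ _ _ _ _ HI hS m hm Q (conj hQ hlev) y hy).
Qed.

Lemma line_residual_bound A B C x y q th w w' c s t dl :
  1 <= q -> 0 < B -> 0 <= c ->
  Rabs A <= Rpower q s -> B <= Rpower q t -> B * y = A * x + C ->
  Rabs (th - x) < c / Rpower q (1 + s) -> Rabs (w' - y) < c / Rpower q (1 + t) ->
  Rabs (w - w') <= dl -> Rabs (A * th - B * w + C) <= 2 * c / q + B * dl.
Proof.
  intros hq hB hc hA hBq e d1 d2 d3.
  replace (A * th - B * w + C)
    with (A * (th - x) - (B * (w - w') + B * (w' - y))) by lra.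
  eapply Rle_trans; [apply Rabs_triang|]. rewrite Rabs_Ropp.
  eapply Rle_trans; [apply Rplus_le_compat_l; apply Rabs_triang|].
  rewrite !Rabs_mult, (Rabs_pos_eq B) by lra.
  assert (Rabs A * Rabs (th - x) <= c / q)
    by (apply (weighted_error_le q s); try lra; apply Rabs_pos).
  assert (B * Rabs (w' - y) <= c / q) by (apply (weighted_error_le q t); lra).
  assert (B * Rabs (w - w') <= B * dl) by (apply Rmult_le_compat_l; lra).
  replace (2 * c / q) with (c / q + c / q) by (field; lra). lra.
Qed.

Lemma inCnk_1_bounds s t theta c l beta LP n P :
  inCnk s t theta c l beta LP n 1 P ->
  inC s theta c P /\
  Hn c l beta n <= IZR (pt_q P) * IZR (ln_B (LP P)) < Hn c l beta (S n) /\
  Rpower (Hn c l beta (S n)) (t / (1 + t)) * / Rpower (Rbig beta) (3 / t ^ 2)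
    <= IZR (ln_B (LP P)) < Rpower (Hn c l beta (S n)) (t / (1 + t)).
Proof.
  unfold inCnk, inCn. simpl Nat.eqb. cbv iota zeta.
  rewrite mult_IZR, Rpower_Ropp. tauto.
Qed.

Lemma inCnk_ge2_bounds s t theta c l beta LP n k P : (2 <= k)%nat ->
  inCnk s t theta c l beta LP n k P ->
  let Z := Rpower (Hn c l beta (S n)) (t / (1 + t)) *
           Rpower (Rbig beta) (- (3 / t ^ 2) - (INR k - 1) * (1 / (t * (1 + t)))) in
  inC s theta c P /\
  Hn c l beta n <= IZR (pt_q P) * IZR (ln_B (LP P)) < Hn c l beta (S n) /\
  Z <= IZR (ln_B (LP P)) < Z * Rpower (Rbig beta) (1 / (t * (1 + t))).
Proof.
  intros hk. unfold inCnk, inCn.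
  replace (Nat.eqb k 1) with false by (symmetry; apply Nat.eqb_neq; lia).
  cbv zeta. rewrite mult_IZR.
  rewrite minus_INR by lia. replace (INR (k - 2)) with (INR k - 1 - 1)
    by (rewrite minus_INR by lia; simpl; ring).
  replace (- (3 / t ^ 2) - (INR k - 1 - 1) * (1 / (t * (1 + t))))
    with ((- (3 / t ^ 2) - (INR k - 1) * (1 / (t * (1 + t)))) + 1 / (t * (1 + t)))
    by ring.
  rewrite Rpower_plus, <- Rmult_assoc. simpl INR. tauto.
Qed.

Lemma level1_ratio_bounds R r H X q1 q2 B1 B2 :
  0 < R -> 0 < r -> 0 < q1 -> 0 < q2 -> 0 < B1 ->
  H / R <= q1 * B1 < H -> H / R <= q2 * B2 < H ->
  X * / r <= B1 < X -> X * / r <= B2 < X ->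
  q1 / q2 <= R * r /\ q2 * B1 <= r * H.
Proof.
  intros hR hr hq1 hq2 hB1 [h1 h1'] [h2 h2'] [b1 b1'] [b2 b2'].
  assert (hX1 : X <= r * B1).
  { replace X with (r * (X * / r)) by (field; lra). apply Rmult_le_compat_l; lra. }
  assert (hH2 : H <= R * (q2 * B2)).
  { replace H with (R * (H / R)) by (field; lra). apply Rmult_le_compat_l; lra. }
  split.
  - apply (Rmult_le_reg_r q2); [lra|].
    replace (q1 / q2 * q2) with q1 by (field; lra).
    assert (R * (q2 * B2) < R * (q2 * X))
      by (apply Rmult_lt_compat_l; [lra|]; apply Rmult_lt_compat_l; lra).
    assert (R * (q2 * X) <= R * (q2 * (r * B1)))
      by (apply Rmult_le_compat_l; [lra|]; apply Rmult_le_compat_l; lra).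
    apply Rmult_le_reg_r with B1; [lra|]. nra.
  - assert (hX2 : X <= r * B2).
    { replace X with (r * (X * / r)) by (field; lra). apply Rmult_le_compat_l; lra. }
    assert (q2 * B1 < q2 * X) by (apply Rmult_lt_compat_l; lra).
    assert (q2 * X <= q2 * (r * B2)) by (apply Rmult_le_compat_l; lra).
    assert (r * (q2 * B2) <= r * H) by (apply Rmult_le_compat_l; lra).
    lra.
Qed.

Lemma cleared_residual_bound A1 B1 C1 x2 y2 q1 q2 th w2 c s t :
  0 < q1 -> 0 < q2 -> 0 <= s <= 1 -> 0 <= t <= 1 -> 0 <= c -> 0 < B1 ->
  Rabs A1 <= Rpower q1 s -> B1 <= Rpower q1 t ->
  Rabs (th - x2) < c / Rpower q2 (1 + s) -> Rabs (w2 - y2) < c / Rpower q2 (1 + t) ->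
  Rabs (q2 * (A1 * x2 - B1 * y2 + C1))
    <= 2 * c * (1 + q1 / q2) + q2 * Rabs (A1 * th - B1 * w2 + C1).
Proof.
  intros hq1 hq2 hs ht hc hB hA hBq dx dy.
  replace (q2 * (A1 * x2 - B1 * y2 + C1))
    with (q2 * (A1 * (x2 - th)) + q2 * (B1 * (w2 - y2)) + q2 * (A1 * th - B1 * w2 + C1))
    by ring.
  assert (ex : q2 * (Rabs A1 * Rabs (x2 - th)) <= c * (1 + q1 / q2)).
  { rewrite Rabs_minus_sym. apply (weighted_error_cross q1 q2 s); auto. apply Rabs_pos. }
  assert (ey : q2 * (B1 * Rabs (w2 - y2)) <= c * (1 + q1 / q2))
    by (apply (weighted_error_cross q1 q2 t); auto; lra).
  eapply Rle_trans; [apply Rabs_triang|].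
  eapply Rle_trans; [apply Rplus_le_compat_r; apply Rabs_triang|].
  rewrite !Rabs_mult, !(Rabs_pos_eq q2), (Rabs_pos_eq B1) by lra. lra.
Qed.

Lemma level1_bound_lt_1 R r c q1 q2 T :
  16 < R -> 1 <= r -> 0 < c -> c * (R ^ 2 * r) <= / 8 ->
  q1 / q2 <= R * r -> q2 / q1 <= R * r -> T <= 4 * c * R ^ 2 * r ->
  2 * c * (1 + q1 / q2) + (2 * c * (q2 / q1) + T) < 1.
Proof.
  intros hR hr hc hcR h12 h21 hT.
  assert (hRr : c * (R * r) * 16 <= c * (R ^ 2 * r)).
  { replace (R ^ 2) with (R * R) by ring.
    assert (0 <= c * R * r) by (apply Rmult_le_pos; [apply Rmult_le_pos|]; lra). nra. }
  assert (c <= c * (R * r)) by (assert (1 <= R * r) by nra; nra).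
  assert (c * (q1 / q2) <= c * (R * r)) by (apply Rmult_le_compat_l; lra).
  assert (c * (q2 / q1) <= c * (R * r)) by (apply Rmult_le_compat_l; lra).
  lra.
Qed.

Section LevelOne.
Variables (s t theta c beta l : R) (LP : ratpt -> line).
Hypotheses (Hs : 0 < s) (Ht : 0 < t) (Hst : s + t = 1) (Hbeta : 0 < beta < 1)
  (Hl : 0 < l) (Hc0 : 0 < c) (Hc8 : c <= / 8 * Rpower (Rbig beta) (-2 - 3 / t ^ 2)).
Hypothesis HLP : forall P, inC s theta c P ->
  is_line (LP P) /\ on_line (LP P) P /\
  Rabs (IZR (ln_A (LP P))) <= Rpower (IZR (pt_q P)) s /\
  IZR (ln_B (LP P)) <= Rpower (IZR (pt_q P)) t.

Lemma level1_denominators n P1 P2 :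
  inCnk s t theta c l beta LP n 1 P1 -> inCnk s t theta c l beta LP n 1 P2 ->
  IZR (pt_q P1) / IZR (pt_q P2) <= Rbig beta * Rpower (Rbig beta) (3 / t ^ 2) /\
  IZR (pt_q P2) * IZR (ln_B (LP P1))
    <= Rpower (Rbig beta) (3 / t ^ 2) * Hn c l beta (S n).
Proof.
  intros h1 h2.
  apply inCnk_1_bounds in h1 as [hC1 [hH1 hB1]], h2 as [hC2 [hH2 hB2]].
  destruct (HLP P1 hC1) as [hL1 _].
  pose proof (IZR_pos_ge_1 _ (proj1 (proj1 hC1))).
  pose proof (IZR_pos_ge_1 _ (proj1 (proj1 hC2))).
  pose proof (IZR_pos_ge_1 _ (proj1 hL1)).
  pose proof (Rbig_gt_16 beta Hbeta).
  pose proof (Rpower_pos (Rbig beta) (3 / t ^ 2)).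
  rewrite (Hn_pred c l beta n Hbeta) in hH1, hH2.
  apply (level1_ratio_bounds _ _ _ (Rpower (Hn c l beta (S n)) (t / (1 + t)))
           _ _ _ (IZR (ln_B (LP P2)))); lra.
Qed.

(* If P1, P2 lie in C_(n,1) and Delta(P1), Delta(P2) contain points at
   distance at most l R^(1-n), then P2 lies on L_(P1): the integer
   q2 (A1 p2/q2 - B1 r2/q2 + C1) has absolute value below 1. *)
Lemma level1_on_line n P1 P2 w1 w2 :
  (1 <= n)%nat ->
  inCnk s t theta c l beta LP n 1 P1 -> inDelta t c P1 w1 ->
  inCnk s t theta c l beta LP n 1 P2 -> inDelta t c P2 w2 ->
  Rabs (w2 - w1) <= l * / Rbig beta ^ (n - 1) ->
  on_line (LP P1) P2.
Proof.
  intros hn h1 hd1 h2 hd2 hdl.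
  destruct (level1_denominators n P1 P2 h1 h2) as [hQ12 hq2B1].
  destruct (level1_denominators n P2 P1 h2 h1) as [hQ21 _].
  apply inCnk_1_bounds in h1 as [hC1 _], h2 as [hC2 _].
  destruct (HLP P1 hC1) as [hL1 [ho1 [hA1 hBq1]]].
  pose proof (on_line_eq _ _ hL1 (proj1 hC1) ho1) as e1.
  pose proof (IZR_pos_ge_1 _ (proj1 (proj1 hC1))) as hq1.
  pose proof (IZR_pos_ge_1 _ (proj1 (proj1 hC2))) as hq2.
  pose proof (IZR_pos_ge_1 _ (proj1 hL1)) as hB1.
  apply on_line_of_small_residual; [exact hL1 | exact (proj1 hC2)|].
  destruct hC1 as [_ hx1], hC2 as [_ hx2]. unfold inDelta in hd1, hd2.
  pose proof (Rbig_gt_16 beta Hbeta) as hR.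
  pose proof (width_times_Hn c l beta n 1 Hl Hbeta hn) as hdlH. simpl plus in hdlH.
  pose proof (c_R2_r_le c beta t Hbeta Hc8) as hcR.
  set (R := Rbig beta) in *. set (H := Hn c l beta (S n)) in *.
  set (r := Rpower R (3 / t ^ 2)) in *. set (dl := l * / R ^ (n - 1)) in *.
  set (q1 := IZR (pt_q P1)) in *. set (q2 := IZR (pt_q P2)) in *.
  set (B1 := IZR (ln_B (LP P1))) in *.
  assert (hr : 1 <= r)
    by (apply Rpower_ge_1; [lra | apply Rlt_le, Rdiv_lt_0_compat; [lra | apply pow_lt; lra]]).
  assert (he : Rabs (IZR (ln_A (LP P1)) * theta - B1 * w2 + IZR (ln_C (LP P1)))
               <= 2 * c / q1 + B1 * dl).
  { apply (line_residual_bound _ _ _ (IZR (pt_p P1) / q1) (IZR (pt_r P1) / q1)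
      _ _ _ w1 _ s t); auto; lra. }
  assert (hq2e : q2 * Rabs (IZR (ln_A (LP P1)) * theta - B1 * w2 + IZR (ln_C (LP P1)))
                 <= 2 * c * (q2 / q1) + q2 * B1 * dl).
  { apply Rle_trans with (q2 * (2 * c / q1 + B1 * dl)).
    - apply Rmult_le_compat_l; lra.
    - right. field. lra. }
  assert (hT : q2 * B1 * dl <= 4 * c * R ^ 2 * r).
  { pose proof (Rabs_pos (w2 - w1)).
    apply Rle_trans with (r * H * dl); [apply Rmult_le_compat_r; lra|].
    replace (r * H * dl) with (r * (dl * H)) by ring. rewrite hdlH. right; ring. }
  eapply Rle_lt_trans.
  { apply (cleared_residual_bound _ _ _ _ _ q1 _ theta w2 c s t); lra. }
  assert (2 * c * (1 + q1 / q2) + (2 * c * (q2 / q1) + q2 * B1 * dl) < 1)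
    by (apply (level1_bound_lt_1 R r); lra).
  lra.
Qed.

(* Case k = 1 of the theorem: each of P1, P2 lies on the other's line,
   so either the lines or the points coincide. *)
Lemma level1_same_line n P1 P2 w1 w2 :
  (1 <= n)%nat ->
  inCnk s t theta c l beta LP n 1 P1 -> inDelta t c P1 w1 ->
  inCnk s t theta c l beta LP n 1 P2 -> inDelta t c P2 w2 ->
  Rabs (w2 - w1) <= l * / Rbig beta ^ (n - 1) ->
  LP P1 = LP P2.
Proof.
  intros hn h1 hd1 h2 hd2 hdl.
  pose proof (level1_on_line n P1 P2 w1 w2 hn h1 hd1 h2 hd2 hdl) as o12.
  rewrite Rabs_minus_sym in hdl.
  pose proof (level1_on_line n P2 P1 w2 w1 hn h2 hd2 h1 hd1 hdl) as o21.
  destruct h1 as [[hC1 _] _], h2 as [[hC2 _] _].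
  destruct (HLP P1 hC1) as [hL1 [o11 _]], (HLP P2 hC2) as [hL2 [o22 _]].
  destruct (two_points_one_line (LP P1) (LP P2) P1 P2 hL1 hL2 (proj1 hC1)
    (proj1 hC2) o11 o12 o21 o22) as [e | ->]; auto.
Qed.
End LevelOne.

Lemma ratpt_of_fractions_pos (X D Y : Z) : (0 < D)%Z ->
  exists Q, is_ratpt Q /\ IZR (pt_q Q) <= IZR D /\
    IZR (pt_p Q) / IZR (pt_q Q) = IZR X / IZR D /\
    IZR (pt_r Q) / IZR (pt_q Q) = IZR Y / IZR D.
Proof.
  intros hD.
  destruct (primitive_reduction X D Y hD)
    as [ka [kd [kb [g [hg [eX [eD [eY [hkd hgcd]]]]]]]]].
  exists (ka, kd, kb). unfold is_ratpt, pt_p, pt_q, pt_r; simpl.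
  apply IZR_lt in hg, hkd.
  rewrite eX, eD, eY, !mult_IZR.
  split; [split; [apply lt_IZR; lra | exact hgcd]|].
  split; [|split; field; lra].
  assert (1 <= IZR g) by (apply IZR_pos_ge_1, lt_IZR; lra). nra.
Qed.

Lemma ratpt_of_fractions (X D Y : Z) : D <> 0%Z ->
  exists Q, is_ratpt Q /\ IZR (pt_q Q) <= Rabs (IZR D) /\
    IZR (pt_p Q) / IZR (pt_q Q) = IZR X / IZR D /\
    IZR (pt_r Q) / IZR (pt_q Q) = IZR Y / IZR D.
Proof.
  intros hD. destruct (Z_lt_le_dec 0 D) as [hpos|hneg].
  - rewrite Rabs_pos_eq by (apply IZR_le; lia).
    apply ratpt_of_fractions_pos; exact hpos.
  - destruct (ratpt_of_fractions_pos (- X) (- D) (- Y)) as [Q [hQ [hq [hx hy]]]];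
      [lia|].
    assert (IZR D < 0) by (apply IZR_lt; lia).
    exists Q. rewrite !opp_IZR in *. rewrite Rabs_left by lra.
    split; [exact hQ|]. split; [exact hq|].
    rewrite hx, hy. split; field; lra.
Qed.

Lemma error_rescale u D q M E e c : 0 <= u -> 0 <= e -> 1 <= q <= D -> D <= M ->
  u * D <= E -> E * Rpower M e < c -> u < c / Rpower q (1 + e).
Proof.
  intros hu he hq hDM huE hE.
  pose proof (Rpower_pos q (1 + e)) as hp.
  apply (Rmult_lt_reg_r (Rpower q (1 + e))); [exact hp|].
  replace (c / Rpower q (1 + e) * Rpower q (1 + e)) with c by (field; lra).
  assert (hqD : Rpower q (1 + e) <= D * Rpower M e).
  { rewrite Rpower_succ by lra. apply Rmult_le_compat; try lra.
    - left; apply Rpower_pos.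
    - apply Rle_Rpower_l; lra. }
  assert (u * Rpower q (1 + e) <= u * D * Rpower M e)
    by (rewrite Rmult_assoc; apply Rmult_le_compat_l; lra).
  assert (u * D * Rpower M e <= E * Rpower M e)
    by (apply Rmult_le_compat_r; [left; apply Rpower_pos | exact huE]).
  lra.
Qed.

Definition residual (L : line) (th w : R) : R :=
  IZR (ln_A L) * th - IZR (ln_B L) * w + IZR (ln_C L).

(* Two lines with equal slopes and residuals at most K B1, K B2 at a common
   point coincide when 2 K B1 B2 < 1: then C1 B2 - C2 B1 = e1 B2 - e2 B1 is
   an integer of absolute value below 1. *)
Lemma parallel_lines_coincide L1 L2 th w K :
  is_line L1 -> is_line L2 ->
  (ln_A L1 * ln_B L2 = ln_A L2 * ln_B L1)%Z ->
  Rabs (residual L1 th w) <= K * IZR (ln_B L1) ->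
  Rabs (residual L2 th w) <= K * IZR (ln_B L2) ->
  2 * K * IZR (ln_B L1) * IZR (ln_B L2) < 1 ->
  L1 = L2.
Proof.
  intros hL1 hL2 hA he1 he2 hK.
  pose proof (IZR_lt _ _ (proj1 hL1)) as hB1.
  pose proof (IZR_lt _ _ (proj1 hL2)) as hB2.
  apply line_eq; auto.
  enough (ln_C L1 * ln_B L2 - ln_C L2 * ln_B L1 = 0)%Z by lia.
  apply IZR_abs_lt_1.
  apply (f_equal IZR) in hA. rewrite !mult_IZR in hA.
  replace (IZR (ln_C L1 * ln_B L2 - ln_C L2 * ln_B L1))
    with (residual L1 th w * IZR (ln_B L2) - residual L2 th w * IZR (ln_B L1))
    by (unfold residual; rewrite minus_IZR, !mult_IZR;
        assert (th * (IZR (ln_A L1) * IZR (ln_B L2)) = th * (IZR (ln_A L2) * IZR (ln_B L1)))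
          by (rewrite hA; reflexivity);
        lra).
  unfold Rminus. eapply Rle_lt_trans; [apply Rabs_triang|].
  rewrite Rabs_Ropp, !Rabs_mult, !(Rabs_pos_eq (IZR (ln_B _))) by lra.
  assert (Rabs (residual L1 th w) * IZR (ln_B L2) <= K * IZR (ln_B L1) * IZR (ln_B L2))
    by (apply Rmult_le_compat_r; lra).
  assert (Rabs (residual L2 th w) * IZR (ln_B L1) <= K * IZR (ln_B L2) * IZR (ln_B L1))
    by (apply Rmult_le_compat_r; lra).
  lra.
Qed.

(* Cramer's rule with errors: if A_i theta - B_i w + C_i = e_i, the
   intersection point (X/D, Y/D) of the two lines satisfies
   (theta - X/D) D = e1 B2 - e2 B1 and (w - Y/D) D = A2 e1 - A1 e2. *)
Lemma cramer_errors A1 B1 C1 A2 B2 C2 th w : A1 * B2 - A2 * B1 <> 0 ->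
  (th - (B1 * C2 - C1 * B2) / (A1 * B2 - A2 * B1)) * (A1 * B2 - A2 * B1)
    = (A1 * th - B1 * w + C1) * B2 - (A2 * th - B2 * w + C2) * B1 /\
  (w - (A1 * C2 - A2 * C1) / (A1 * B2 - A2 * B1)) * (A1 * B2 - A2 * B1)
    = A2 * (A1 * th - B1 * w + C1) - A1 * (A2 * th - B2 * w + C2).
Proof. intros hD. split; field; exact hD. Qed.

Lemma residual_combinations_le e1 e2 A1 A2 B1 B2 K a1 a2 : 0 < B1 -> 0 < B2 ->
  Rabs e1 <= K * B1 -> Rabs e2 <= K * B2 -> Rabs A1 <= a1 -> Rabs A2 <= a2 ->
  Rabs (e1 * B2 - e2 * B1) <= 2 * K * B1 * B2 /\
  Rabs (A2 * e1 - A1 * e2) <= K * (a1 * B2 + a2 * B1).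
Proof.
  intros hB1 hB2 he1 he2 ha1 ha2. unfold Rminus. split.
  - eapply Rle_trans; [apply Rabs_triang|].
    rewrite Rabs_Ropp, !Rabs_mult, (Rabs_pos_eq B1), (Rabs_pos_eq B2) by lra.
    assert (Rabs e1 * B2 <= K * B1 * B2) by (apply Rmult_le_compat_r; lra).
    assert (Rabs e2 * B1 <= K * B2 * B1) by (apply Rmult_le_compat_r; lra).
    lra.
  - eapply Rle_trans; [apply Rabs_triang|].
    rewrite Rabs_Ropp, !Rabs_mult.
    assert (Rabs A2 * Rabs e1 <= a2 * (K * B1))
      by (apply Rmult_le_compat; try apply Rabs_pos; lra).
    assert (Rabs A1 * Rabs e2 <= a1 * (K * B2))
      by (apply Rmult_le_compat; try apply Rabs_pos; lra).
    lra.
Qed.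

(* Two non-parallel lines with residuals at most K B1, K B2 at (theta, w)
   meet at a rational point Q approximating (theta, w) to the precision
   required in C, with denominator at most M = a1 B2 + a2 B1, where a_i
   bounds |A_i|: the errors of Q, scaled by |D| >= q_Q, are the residual
   combinations above. *)
Lemma intersection_approximation L1 L2 th w K a1 a2 c s t :
  is_line L1 -> is_line L2 ->
  (ln_A L1 * ln_B L2 - ln_A L2 * ln_B L1 <> 0)%Z -> 0 <= s -> 0 <= t ->
  Rabs (residual L1 th w) <= K * IZR (ln_B L1) ->
  Rabs (residual L2 th w) <= K * IZR (ln_B L2) ->
  Rabs (IZR (ln_A L1)) <= a1 -> Rabs (IZR (ln_A L2)) <= a2 ->
  let M := a1 * IZR (ln_B L2) + a2 * IZR (ln_B L1) in
  2 * K * IZR (ln_B L1) * IZR (ln_B L2) * Rpower M s < c ->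
  K * Rpower M (1 + t) < c ->
  exists Q, is_ratpt Q /\ IZR (pt_q Q) <= M /\
    Rabs (th - IZR (pt_p Q) / IZR (pt_q Q)) < c / Rpower (IZR (pt_q Q)) (1 + s) /\
    Rabs (w - IZR (pt_r Q) / IZR (pt_q Q)) < c / Rpower (IZR (pt_q Q)) (1 + t).
Proof.
  intros hL1 hL2 hD hs ht he1 he2 ha1 ha2 M hxc hyc.
  pose proof (IZR_lt _ _ (proj1 hL1)) as hB1.
  pose proof (IZR_lt _ _ (proj1 hL2)) as hB2.
  destruct (ratpt_of_fractions
              (ln_B L1 * ln_C L2 - ln_C L1 * ln_B L2)
              (ln_A L1 * ln_B L2 - ln_A L2 * ln_B L1)
              (ln_A L1 * ln_C L2 - ln_A L2 * ln_C L1) hD) as [Q [hQ [hqD [hx hy]]]].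
  exists Q. rewrite hx, hy.
  pose proof (IZR_abs_ge_1 _ hD) as hD1.
  pose proof (IZR_pos_ge_1 _ (proj1 hQ)) as hq1.
  rewrite !minus_IZR, !mult_IZR in *. unfold residual in *.
  assert (hD0 : IZR (ln_A L1) * IZR (ln_B L2) - IZR (ln_A L2) * IZR (ln_B L1) <> 0)
    by (intro h0; rewrite h0, Rabs_R0 in hD1; lra).
  destruct (cramer_errors (IZR (ln_A L1)) (IZR (ln_B L1)) (IZR (ln_C L1))
              (IZR (ln_A L2)) (IZR (ln_B L2)) (IZR (ln_C L2)) th w hD0) as [ex ey].
  destruct (residual_combinations_le _ _ _ _ _ _ K a1 a2 hB1 hB2 he1 he2 ha1 ha2)
    as [hcx hcy].
  rewrite <- ex in hcx. rewrite <- ey in hcy. rewrite Rabs_mult in hcx, hcy.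
  set (D := IZR (ln_A L1) * IZR (ln_B L2) - IZR (ln_A L2) * IZR (ln_B L1)) in *.
  assert (hDM : Rabs D <= M).
  { unfold D, M, Rminus. eapply Rle_trans; [apply Rabs_triang|].
    rewrite Rabs_Ropp, !Rabs_mult, !(Rabs_pos_eq (IZR (ln_B _))) by lra.
    apply Rplus_le_compat; apply Rmult_le_compat_r; lra. }
  split; [exact hQ|]. split; [lra|]. split.
  - apply (error_rescale _ (Rabs D) _ M (2 * K * IZR (ln_B L1) * IZR (ln_B L2)));
      try apply Rabs_pos; lra.
  - apply (error_rescale _ (Rabs D) _ M (K * M)); try apply Rabs_pos; try lra.
    + fold M in hcy. lra.
    + rewrite Rpower_succ in hyc; [lra|]. pose proof (Rabs_pos D). lra.
Qed.

Lemma ln_div x y : 0 < x -> 0 < y -> ln (x / y) = ln x - ln y.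
Proof.
  intros. unfold Rdiv. rewrite ln_mult, ln_Rinv; try lra.
  apply Rinv_0_lt_compat; lra.
Qed.

Lemma ln_constants :
  0 < ln 2 /\ ln 16 = 4 * ln 2 /\ ln 5 < 3 * ln 2.
Proof.
  assert (l2 : 0 < ln 2) by (rewrite <- ln_1; apply ln_increasing; lra).
  assert (lp : forall n, ln (2 ^ n) = INR n * ln 2) by (intro; apply ln_pow; lra).
  split; [exact l2|]. split.
  - replace 16 with (2 ^ 4) by ring. rewrite lp. simpl. ring.
  - replace (3 * ln 2) with (ln (2 ^ 3)) by (rewrite lp; simpl; ring).
    apply ln_increasing; lra.
Qed.

Lemma level_exponent_bound t K0 : 0 < t -> t <= 1 -> 2 <= K0 ->
  K0 + 1 + (2 + (1 - t)) * (1 / (t * (1 + t)))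
   - (2 + (1 - t) - (1 - t) ^ 2) * (3 / t ^ 2 + (K0 - 1) * (1 / (t * (1 + t))))
  <= -3.
Proof.
  intros ht ht1 hk.
  replace ((2 + (1 - t) - (1 - t) ^ 2) * (3 / t ^ 2 + (K0 - 1) * (1 / (t * (1 + t)))))
    with (3 * (1 + t) * (2 - t) / t ^ 2 + (K0 - 1) * ((2 - t) / t)) by (field; lra).
  replace ((2 + (1 - t)) * (1 / (t * (1 + t)))) with ((3 - t) / (t * (1 + t)))
    by (field; lra).
  assert (h1 : K0 - 1 <= (K0 - 1) * ((2 - t) / t)).
  { assert (1 <= (2 - t) / t).
    { apply (Rmult_le_reg_r t); [lra|].
      replace ((2 - t) / t * t) with (2 - t) by (field; lra). lra. }
    nra. }
  assert (h2 : 5 + (3 - t) / (t * (1 + t)) - 3 * (1 + t) * (2 - t) / t ^ 2 <= 0).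
  { replace (5 + (3 - t) / (t * (1 + t)) - 3 * (1 + t) * (2 - t) / t ^ 2)
      with ((8 * t ^ 3 + 4 * t ^ 2 - 6 * t - 6) * / (t ^ 2 * (1 + t))) by (field; lra).
    assert (t ^ 3 <= t) by (simpl; nra). assert (t ^ 2 <= t) by (simpl; nra).
    assert (0 < / (t ^ 2 * (1 + t)))
      by (apply Rinv_0_lt_compat, Rmult_lt_0_compat; [apply pow_lt|]; lra).
    nra. }
  lra.
Qed.

(* Estimates for two points of a level C_(n,k), k >= 2, with H = H_(n+1),
   K0 = k, mu = 1/(t(1+t)), Z = H^(t/(1+t)) R^(-3/t^2 - (K0-1) mu):
   their line coefficients satisfy Z <= B_i < Z R^mu and their
   denominators q_i <= H / Z.  With K = 5 c R^(K0+1) / H (a bound for the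
   residuals, divided by B) and M = q1^(1-t) B2 + q2^(1-t) B1 (a bound for
   the determinant of the two lines), all the smallness conditions of the
   proof follow by comparing logarithms. *)
Section LevelNumerics.
Variables (R H t c K0 q1 q2 B1 B2 : R).
Hypotheses (hR : 16 < R) (ht : 0 < t) (ht1 : t <= 1) (hK0 : 2 <= K0)
  (hc : 0 < c) (hc8 : c <= / 8 * Rpower R (-2 - 3 / t ^ 2)) (hH : 1 < H).

Let mu := 1 / (t * (1 + t)).
Let Z := Rpower H (t / (1 + t)) * Rpower R (- (3 / t ^ 2) - (K0 - 1) * mu).
Let K := 5 * c * Rpower R (K0 + 1) / H.
Let M := Rpower q1 (1 - t) * B2 + Rpower q2 (1 - t) * B1.
Let W := Rpower (H / Z) (1 - t) * (Z * Rpower R mu).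

Hypotheses (hB1 : 0 < B1 < Z * Rpower R mu) (hB2 : 0 < B2 < Z * Rpower R mu)
  (hq1 : 0 < q1 <= H / Z) (hq2 : 0 < q2 <= H / Z).

Lemma Z_pos : 0 < Z.
Proof. apply Rmult_lt_0_compat; apply Rpower_pos. Qed.

Lemma ln_Z : ln Z = t / (1 + t) * ln H - (3 / t ^ 2 + (K0 - 1) * mu) * ln R.
Proof.
  unfold Z. rewrite ln_mult, !ln_Rpower by apply Rpower_pos. ring.
Qed.

Lemma ln_B_lt B : 0 < B < Z * Rpower R mu -> ln B < ln Z + mu * ln R.
Proof.
  intros hB. rewrite <- ln_Rpower, <- ln_mult by (apply Z_pos || apply Rpower_pos).
  apply ln_increasing; lra.
Qed.

Lemma ln_c_le : ln c <= - ln 8 - (2 + 3 / t ^ 2) * ln R.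
Proof.
  replace (- ln 8 - (2 + 3 / t ^ 2) * ln R) with (ln (/ 8 * Rpower R (-2 - 3 / t ^ 2)))
    by (rewrite ln_mult, ln_Rinv, ln_Rpower by (lra || apply Rpower_pos); ring).
  apply ln_le; lra.
Qed.

Lemma ln_K : ln K = ln 5 + ln c + (K0 + 1) * ln R - ln H.
Proof.
  pose proof (Rpower_pos R (K0 + 1)).
  unfold K. rewrite ln_div, !ln_mult, ln_Rpower; try lra.
  apply Rmult_lt_0_compat; lra.
Qed.

Lemma M_le_2W : M <= 2 * W.
Proof.
  pose proof Z_pos.
  assert (Rpower q1 (1 - t) <= Rpower (H / Z) (1 - t)) by (apply Rle_Rpower_l; lra).
  assert (Rpower q2 (1 - t) <= Rpower (H / Z) (1 - t)) by (apply Rle_Rpower_l; lra).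
  pose proof (Rpower_pos q1 (1 - t)). pose proof (Rpower_pos q2 (1 - t)).
  assert (Rpower q1 (1 - t) * B2 <= W) by (apply Rmult_le_compat; lra).
  assert (Rpower q2 (1 - t) * B1 <= W) by (apply Rmult_le_compat; lra).
  unfold M. lra.
Qed.

Lemma ln_W : ln W = (1 - t) * (ln H - ln Z) + ln Z + mu * ln R.
Proof.
  pose proof Z_pos. unfold W.
  pose proof (Rdiv_lt_0_compat H Z ltac:(lra) ltac:(lra)).
  rewrite !ln_mult, !ln_Rpower, ln_div; try lra; apply Rpower_pos.
Qed.

Lemma M_pos : 0 < M.
Proof.
  unfold M. pose proof (Rpower_pos q1 (1 - t)). pose proof (Rpower_pos q2 (1 - t)).
  nra.
Qed.

Lemma ln_M_le : ln M <= ln 2 + ln W.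
Proof.
  pose proof M_pos. pose proof M_le_2W. rewrite <- ln_mult; [apply ln_le|..]; lra.
Qed.

(* The identity behind the estimates: W^(1+t) = H R^-(2/t + 2 + K0). *)
Lemma ln_W_scaled : (1 + t) * ln W = ln H - (2 / t + 2 + K0) * ln R.
Proof. rewrite ln_W, ln_Z. unfold mu. field. lra. Qed.

(* R > 16 and t <= 1 give the slack in each estimate. *)
Lemma ln_R_gt : 4 * ln 2 < ln R.
Proof.
  destruct ln_constants as [_ [l16 _]]. rewrite <- l16.
  apply ln_increasing; lra.
Qed.

Lemma two_le_two_div_t : 2 <= 2 / t.
Proof.
  apply (Rmult_le_reg_r t); [lra|].
  replace (2 / t * t) with 2 by (field; lra). nra.
Qed.

Lemma ln_M_scaled : (1 + t) * ln M <= (1 + t) * ln 2 + ln H - (2 / t + 2 + K0) * ln R.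
Proof.
  assert ((1 + t) * ln M <= (1 + t) * (ln 2 + ln W))
    by (apply Rmult_le_compat_l; [lra | exact ln_M_le]).
  pose proof ln_W_scaled. lra.
Qed.

(* The heights of intersection points: M^(1+t) < H R^-K0 = H_(n-k+1). *)
Lemma level_M_pow_lt : Rpower M (1 + t) < H / Rpower R K0.
Proof.
  pose proof M_pos. pose proof ln_M_scaled. pose proof ln_R_gt.
  pose proof two_le_two_div_t. destruct ln_constants as [l2 _].
  apply ln_lt_inv; [apply Rpower_pos | apply Rdiv_lt_0_compat; [lra | apply Rpower_pos]|].
  rewrite ln_Rpower, ln_div, ln_Rpower by (lra || apply Rpower_pos).
  assert (2 * ln R <= 2 / t * ln R) by (apply Rmult_le_compat_r; lra).
  assert ((1 + t) * ln 2 <= 2 * ln 2) by (apply Rmult_le_compat_r; lra).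
  lra.
Qed.

Lemma level_K_M_lt : K * Rpower M (1 + t) < c.
Proof.
  pose proof M_pos. pose proof ln_M_scaled. pose proof ln_R_gt. pose proof ln_K.
  pose proof two_le_two_div_t. destruct ln_constants as [l2 [_ l5]].
  pose proof (Rpower_pos R (K0 + 1)).
  assert (hK : 0 < K) by (unfold K; apply Rdiv_lt_0_compat; nra).
  pose proof (Rpower_pos M (1 + t)).
  apply ln_lt_inv; [apply Rmult_lt_0_compat; lra | lra |].
  rewrite ln_mult, ln_Rpower by lra.
  assert (2 * ln R <= 2 / t * ln R) by (apply Rmult_le_compat_r; lra).
  assert ((1 + t) * ln 2 <= 2 * ln 2) by (apply Rmult_le_compat_r; lra).
  lra.
Qed.

Lemma level_product_lt : 2 * K * B1 * B2 < 1.
Proof.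
  pose proof ln_R_gt. pose proof ln_K. pose proof ln_c_le.
  pose proof (ln_B_lt B1 hB1). pose proof (ln_B_lt B2 hB2).
  destruct ln_constants as [l2 [_ l5]].
  assert (l8 : ln 8 = 3 * ln 2)
    by (replace 8 with (2 ^ 3) by ring; rewrite ln_pow by lra; simpl; ring).
  assert (hK : 0 < K) by (unfold K; apply Rdiv_lt_0_compat; [|lra];
                          pose proof (Rpower_pos R (K0 + 1)); nra).
  assert (hlnH : 0 < ln H) by (rewrite <- ln_1; apply ln_increasing; lra).
  (* the exponent of H is 2t/(1+t) - 1 <= 0, that of R at most 1 - 9/t^2 <= -8 *)
  assert (eH : (2 * (t / (1 + t)) - 1) * ln H <= 0).
  { assert (2 * (t / (1 + t)) - 1 <= 0).
    { replace (2 * (t / (1 + t)) - 1) with ((t - 1) / (1 + t)) by (field; lra).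
      unfold Rdiv. assert (0 < / (1 + t)) by (apply Rinv_0_lt_compat; lra). nra. }
    nra. }
  assert (hmu : 1 <= 2 * mu).
  { unfold mu. apply (Rmult_le_reg_r (t * (1 + t))); [nra|].
    replace (2 * (1 / (t * (1 + t))) * (t * (1 + t))) with 2 by (field; lra). nra. }
  assert (hlam : 3 <= 3 / t ^ 2).
  { apply (Rmult_le_reg_r (t ^ 2)); [nra|].
    replace (3 / t ^ 2 * t ^ 2) with 3 by (field; lra). nra. }
  assert (eR : (K0 - 2) * ln R <= (K0 - 2) * (2 * mu) * ln R).
  { rewrite Rmult_assoc. apply Rmult_le_compat_l; [lra|]. nra. }
  assert (e3 : 3 * ln R <= 3 / t ^ 2 * ln R) by (apply Rmult_le_compat_r; lra).
  assert (p1 : 0 < 2 * K * B1) by (apply Rmult_lt_0_compat; lra).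
  assert (p2 : 0 < 2 * K * B1 * B2) by (apply Rmult_lt_0_compat; lra).
  apply ln_lt_inv; [exact p2 | lra |].
  rewrite ln_1, !ln_mult by lra.
  rewrite ln_Z in *.
  lra.
Qed.

Lemma level_product_M_lt : 2 * K * B1 * B2 * Rpower M (1 - t) < c.
Proof.
  pose proof ln_R_gt. pose proof ln_K. pose proof M_pos.
  pose proof (ln_B_lt B1 hB1). pose proof (ln_B_lt B2 hB2).
  destruct ln_constants as [l2 [_ l5]].
  assert (hK : 0 < K) by (unfold K; apply Rdiv_lt_0_compat; [|lra];
                          pose proof (Rpower_pos R (K0 + 1)); nra).
  set (E := K0 + 1 + (2 + (1 - t)) * (1 / (t * (1 + t)))
     - (2 + (1 - t) - (1 - t) ^ 2) * (3 / t ^ 2 + (K0 - 1) * (1 / (t * (1 + t))))).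
  (* all powers of H cancel; the power of R is E <= -3 *)
  assert (idE : (K0 + 1) * ln R - ln H + 2 * (ln Z + mu * ln R) + (1 - t) * ln W
                = E * ln R) by (rewrite ln_W, ln_Z; unfold E, mu; field; lra).
  assert (hE : E * ln R <= -3 * ln R)
    by (apply Rmult_le_compat_r; [lra | apply level_exponent_bound; lra]).
  assert (hM : (1 - t) * ln M <= (1 - t) * (ln 2 + ln W))
    by (apply Rmult_le_compat_l; [lra | exact ln_M_le]).
  assert ((1 - t) * ln 2 <= ln 2) by nra.
  assert (p1 : 0 < 2 * K * B1) by (apply Rmult_lt_0_compat; lra).
  assert (p2 : 0 < 2 * K * B1 * B2) by (apply Rmult_lt_0_compat; lra).
  pose proof (Rpower_pos M (1 - t)).
  apply ln_lt_inv; [apply Rmult_lt_0_compat; lra | lra |].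
  rewrite !ln_mult, ln_Rpower by lra.
  lra.
Qed.
End LevelNumerics.

Lemma residual_le_K R H c q B dl P : 0 < R -> 0 < H -> 0 < c -> 1 <= q -> 0 < B ->
  H / R <= q * B -> dl * H = 4 * c * P -> 2 * R <= P ->
  2 * c / q + B * dl <= 5 * c * P / H * B.
Proof.
  intros hR hH hc hq hB hqB hdl hP.
  assert (hHq : H <= R * (q * B)).
  { replace H with (R * (H / R)) by (field; lra). apply Rmult_le_compat_l; lra. }
  apply (Rmult_le_reg_r H); [exact hH|].
  replace ((2 * c / q + B * dl) * H) with (2 * c * H / q + B * (dl * H)) by (field; lra).
  replace (5 * c * P / H * B * H) with (5 * c * P * B) by (field; lra).
  rewrite hdl.
  assert (2 * c * H / q <= 2 * c * R * B).
  { apply (Rmult_le_reg_r q); [lra|].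
    replace (2 * c * H / q * q) with (2 * c * H) by (field; lra). nra. }
  assert (0 <= c * B * (P - 2 * R)) by (apply Rmult_le_pos; nra).
  nra.
Qed.

Section LevelGe2.
Variables (s t theta c beta a0 l : R) (I : list nat -> R * R) (LP : ratpt -> line).
Hypotheses (Hs : 0 < s) (Ht : 0 < t) (Hst : s + t = 1) (Hbeta : 0 < beta < 1)
  (Hl : 0 < l) (Hc0 : 0 < c) (Hc4 : c <= / 4 * l * / Rbig beta)
  (Hc8 : c <= / 8 * Rpower (Rbig beta) (-2 - 3 / t ^ 2))
  (HI : good_tree_map (tree_arity beta) a0 l (Rbig beta) I).
Hypothesis HLP : forall P, inC s theta c P ->
  is_line (LP P) /\ on_line (LP P) P /\
  Rabs (IZR (ln_A (LP P))) <= Rpower (IZR (pt_q P)) s /\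
  IZR (ln_B (LP P)) <= Rpower (IZR (pt_q P)) t.

Lemma level_ge2_residual n k tau P w w' :
  (2 <= k <= n)%nat -> inS s t theta c l beta LP I (n - k) tau ->
  inCnk s t theta c l beta LP n k P -> in_cl (I tau) w -> in_cl (I tau) w' ->
  inDelta t c P w' ->
  Rabs (residual (LP P) theta w)
    <= 5 * c * Rpower (Rbig beta) (INR k + 1) / Hn c l beta (S n) * IZR (ln_B (LP P)).
Proof.
  intros hk hS h hw hw' hd.
  pose proof (inS_interval_width _ _ _ _ _ _ _ _ _ _ _ w w' HI hS hw hw') as hdl.
  apply inCnk_ge2_bounds in h as [hC [hH _]]; [|lia].
  destruct (HLP P hC) as [hL [ho [hA hBq]]].
  pose proof (on_line_eq _ _ hL (proj1 hC) ho) as e.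
  pose proof (IZR_pos_ge_1 _ (proj1 (proj1 hC))) as hq.
  pose proof (IZR_pos_ge_1 _ (proj1 hL)) as hB.
  pose proof (Rbig_gt_16 beta Hbeta) as hR.
  pose proof (width_times_Hn c l beta n k Hl Hbeta ltac:(lia)) as hdlH.
  rewrite (Hn_pred c l beta n Hbeta) in hH.
  destruct hC as [_ hx]. unfold inDelta in hd.
  set (R := Rbig beta) in *. set (H := Hn c l beta (S n)) in *.
  set (q := IZR (pt_q P)) in *. set (B := IZR (ln_B (LP P))) in *.
  assert (hH0 : 0 < H) by nra.
  assert (hP : 2 * R <= R ^ (k + 1)).
  { replace (k + 1)%nat with (S (S (k - 1))) by lia. simpl.
    assert (1 <= R ^ (k - 1)) by (apply pow_R1_Rle; lra). nra. }
  replace (Rpower R (INR k + 1)) with (R ^ (k + 1))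
    by (rewrite <- Rpower_pow by lra; f_equal; rewrite plus_INR; simpl; ring).
  eapply Rle_trans;
    [|apply (residual_le_K R H c q B (l * / R ^ (n - k)) (R ^ (k + 1))); lra].
  unfold residual. fold B.
  apply (line_residual_bound _ _ _ (IZR (pt_p P) / q) (IZR (pt_r P) / q)
           _ _ _ w' _ s t); auto; lra.
Qed.

(* A point Q of C with q_Q^(1+t) < H_(N+1) has height q_Q B_Q below
   H_(N+1) (as B_Q <= q_Q^t), so Delta(Q) misses the intervals of S_N. *)
Lemma inS_avoid_small_denominator N tau Q y :
  inS s t theta c l beta LP I N tau -> inC s theta c Q ->
  Rpower (IZR (pt_q Q)) (1 + t) < Hn c l beta (S N) ->
  in_cl (I tau) y -> ~ inDelta t c Q y.
Proof.
  intros hS hQ hqQ hy.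
  destruct (HLP Q hQ) as [hLQ [_ [_ hBQ]]].
  pose proof (IZR_pos_ge_1 _ (proj1 (proj1 hQ))) as hq1.
  pose proof (IZR_pos_ge_1 _ (proj1 hLQ)) as hB1.
  apply (inS_avoid_low s t theta c l beta LP I a0 N tau Q y HI hS); auto.
  - apply Hn_1_le_1; auto.
  - rewrite mult_IZR. split; [nra|].
    eapply Rle_lt_trans; [|exact hqQ].
    rewrite Rpower_succ by lra. apply Rmult_le_compat_l; lra.
Qed.

Lemma level_ge2_numeric_bounds n k P : (2 <= k)%nat ->
  inCnk s t theta c l beta LP n k P ->
  let H := Hn c l beta (S n) in
  let Z := Rpower H (t / (1 + t)) *
           Rpower (Rbig beta) (- (3 / t ^ 2) - (INR k - 1) * (1 / (t * (1 + t)))) in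
  1 < H /\ 0 < IZR (ln_B (LP P)) < Z * Rpower (Rbig beta) (1 / (t * (1 + t))) /\
  0 < IZR (pt_q P) <= H / Z.
Proof.
  intros hk h H Z.
  apply inCnk_ge2_bounds in h as [hC [hH hB]]; [|exact hk].
  destruct (HLP P hC) as [hL _].
  pose proof (IZR_pos_ge_1 _ (proj1 (proj1 hC))) as hq.
  pose proof (IZR_pos_ge_1 _ (proj1 hL)) as hB1.
  assert (hZ : 0 < Z) by (apply Rmult_lt_0_compat; apply Rpower_pos).
  fold H Z in hH, hB.
  assert (1 <= IZR (pt_q P) * IZR (ln_B (LP P))) by nra.
  split; [lra|]. split; [lra|]. split; [lra|].
  apply (Rmult_le_reg_r Z); [lra|].
  replace (H / Z * Z) with H by (field; lra). nra.
Qed.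

(* The lines L_(P1), L_(P2) have residuals at
   most K B_i at (theta, w1).  If they are parallel they coincide; otherwise
   they meet at a point Q of C with q_Q^(1+t) <= M^(1+t) < H_(n-k+1) and
   w1 in Delta(Q), which the vertex tau of S_(n-k) was built to avoid. *)
Lemma level_ge2_same_line n k tau P1 P2 w1 w2 :
  (2 <= k <= n)%nat -> inS s t theta c l beta LP I (n - k) tau ->
  inCnk s t theta c l beta LP n k P1 -> in_cl (I tau) w1 -> inDelta t c P1 w1 ->
  inCnk s t theta c l beta LP n k P2 -> in_cl (I tau) w2 -> inDelta t c P2 w2 ->
  LP P1 = LP P2.
Proof.
  intros hk hS h1 hw1 hd1 h2 hw2 hd2.
  pose proof (level_ge2_residual n k tau P1 w1 w1 hk hS h1 hw1 hw1 hd1) as he1.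
  pose proof (level_ge2_residual n k tau P2 w1 w2 hk hS h2 hw1 hw2 hd2) as he2.
  destruct (level_ge2_numeric_bounds n k P1 ltac:(lia) h1) as [hH [hB1 hq1]].
  destruct (level_ge2_numeric_bounds n k P2 ltac:(lia) h2) as [_ [hB2 hq2]].
  apply inCnk_ge2_bounds in h1 as [hC1 _], h2 as [hC2 _]; try lia.
  destruct (HLP P1 hC1) as [hL1 [_ [hA1 _]]], (HLP P2 hC2) as [hL2 [_ [hA2 _]]].
  pose proof (Rbig_gt_16 beta Hbeta) as hR.
  assert (hK0 : 2 <= INR k)
    by (replace 2 with (INR 2) by (simpl; ring); apply le_INR; lia).
  assert (es : s = 1 - t) by lra.
  set (R := Rbig beta) in *. set (H := Hn c l beta (S n)) in *.
  set (K := 5 * c * Rpower R (INR k + 1) / H) in *.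
  destruct (Z.eq_dec (ln_A (LP P1) * ln_B (LP P2) - ln_A (LP P2) * ln_B (LP P1)) 0)
    as [hpar | hnpar].
  -
    apply (parallel_lines_coincide _ _ theta w1 K hL1 hL2); try lia; auto.
    apply (level_product_lt R H t c (INR k)); assumption || lra.
  - (* secant lines: their intersection point contradicts tau in S_(n-k) *)
    exfalso.
    destruct (intersection_approximation (LP P1) (LP P2) theta w1 K
                (Rpower (IZR (pt_q P1)) s) (Rpower (IZR (pt_q P2)) s) c s t
                hL1 hL2 hnpar) as [Q [hQ [hqM [hxQ hyQ]]]]; auto; try lra.
    { rewrite es. apply (level_product_M_lt R H t c (INR k)); assumption || lra. }
    { rewrite es. apply (level_K_M_lt R H t c (INR k)); assumption || lra. }
    apply (inS_avoid_small_denominator (n - k) tau Q w1 hS); auto.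
    { split; assumption. }
    pose proof (IZR_pos_ge_1 _ (proj1 hQ)).
    replace (Hn c l beta (S (n - k))) with (H / Rpower R (INR k)).
    + eapply Rle_lt_trans.
      * apply Rle_Rpower_l; [lra | split; [lra | exact hqM]].
      * rewrite es. apply (level_M_pow_lt R H t (INR k)); assumption || lra.
    + rewrite Rpower_pow by lra. unfold H.
      replace (S n) with (S (n - k) + k)%nat by lia. rewrite Hn_shift. fold R.
      field. apply pow_nonzero; lra.
Qed.
End LevelGe2.

Theorem lemma4p2
  (s t theta kappa beta a0 l c : R) (I : list nat -> R * R) (LP : ratpt -> line)
  (Hs : 0 < s) (Ht : 0 < t) (Hst : s + t = 1)
  (Hkappa : is_inf (dioph_set s theta) kappa) (Hkpos : 0 < kappa)
  (Hbeta : 0 < beta < 1) (Hl : 0 < l)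
  (Hc : c = cconst kappa l beta t)
  (HI : good_tree_map (tree_arity beta) a0 l (Rbig beta) I)
  (HLP : forall P, inC s theta c P ->
     is_line (LP P) /\ on_line (LP P) P /\
     Rabs (IZR (ln_A (LP P))) <= Rpower (IZR (pt_q P)) s /\
     IZR (ln_B (LP P)) <= Rpower (IZR (pt_q P)) t) :
  forall (n k : nat) (tau : list nat),
    (1 <= n)%nat -> (1 <= k <= n)%nat ->
    inS s t theta c l beta LP I (n - k) tau ->
    forall P P' : ratpt,
      inCnk s t theta c l beta LP n k P ->
      (exists y, in_cl (I tau) y /\ inDelta t c P y) ->
      inCnk s t theta c l beta LP n k P' ->
      (exists y, in_cl (I tau) y /\ inDelta t c P' y) ->
      LP P = LP P'.
Proof.
  intros n k tau hn hk hS P P' hP [w1 [hw1 hd1]] hP' [w2 [hw2 hd2]].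
  destruct (cconst_bounds kappa l beta t c Hkpos Hl Hbeta Hc) as [hc0 [hc4 hc8]].
  destruct (Nat.eq_dec k 1) as [->|hk1].
  - (* tau has height n - 1, so w1, w2 are within l R^(1-n) *)
    pose proof (inS_interval_width _ _ _ _ _ _ _ _ _ _ _ w2 w1 HI hS hw2 hw1) as hdl.
    exact (level1_same_line s t theta c beta l LP Hs Ht Hst Hbeta Hl hc0 hc8 HLP
             n P P' w1 w2 hn hP hd1 hP' hd2 hdl).
  - exact (level_ge2_same_line s t theta c beta a0 l I LP Hs Ht Hst Hbeta Hl
             hc0 hc4 hc8 HI HLP n k tau P P' w1 w2 ltac:(lia) hS hP hw1 hd1 hP' hw2 hd2).
Qed.
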